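(* Let $a<b$, $\gamma>0$, $\mu=e^{-\gamma(b-a)}$, let $k\ge 1$ be an integer, and let $C_a,C_b\in\mathbb{R}$ be given. With the operators $I^L, I^R, I^0, \mathcal{D}_L, \mathcal{D}_R, \mathcal{D}_0$ defined in the context (with boundary data $C_a$, $C_b$): (i) If $v\in\mathcal{C}^{k+1}[a,b]$, then for all $x\in[a,b]$, \[ \mathcal{D}_{L}[v,\gamma](x) = -\sum_{p=1}^{k}\left(-\frac{1}{\gamma}\right)^{p}\left(\partial_x^{p}v(x)-\partial_x^{p}v(a)e^{-\gamma(x-a)}\right) - \left(-\frac{1}{\gamma}\right)^{k+1} I^{L}[\partial_x^{k+1}v,\gamma](x) + C_a e^{-\gamma(x-a)}, \] \[ \mathcal{D}_{R}[v,\gamma](x) = -\sum_{p=1}^{k}\left(\frac{1}{\gamma}\right)^{p}\left(\partial_x^{p}v(x)-\partial_x^{p}v(b)e^{-\gamma(b-x)}\right) - \left(\frac{1}{\gamma}\right)^{k+1} I^{R}[\partial_x^{k+1}v,\gamma](x) + C_b e^{-\gamma(b-x)}. \] (ii) If $v\in\mathcal{C}^{2k+2}[a,b]$, then for all $x\in[a,b]$, \begin{align*} \mathcal{D}_{0}[v,\gamma](x) =& -\sum_{p=1}^{k}\left(\frac{1}{\gamma}\right)^{2p}\left(\partial_x^{2p}v(x) + \frac{\mu\,\partial_x^{2p}v(b)-\partial_x^{2p}v(a)}{1-\mu^2}e^{-\gamma(x-a)} + \frac{\mu\,\partial_x^{2p}v(a)-\partial_x^{2p}v(b)}{1-\mu^2}e^{-\gamma(b-x)}\right)\\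 & - \frac{\mu C_b - C_a}{1-\mu^2}e^{-\gamma(x-a)} - \frac{\mu C_a - C_b}{1-\mu^2}e^{-\gamma(b-x)}\\ & - \left(\frac{1}{\gamma}\right)^{2k+2}\Big( I^0[\partial_x^{2k+2}v,\gamma](x) + \frac{\mu I^0[\partial_x^{2k+2}v,\gamma](b) - I^0[\partial_x^{2k+2}v,\gamma](a)}{1-\mu^2}e^{-\gamma(x-a)}\\ &\qquad\qquad + \frac{\mu I^0[\partial_x^{2k+2}v,\gamma](a) - I^0[\partial_x^{2k+2}v,\gamma](b)}{1-\mu^2}e^{-\gamma(b-x)}\Big). \end{align*}
   Context: Fix $a<b$, $\gamma>0$ and $\mu=e^{-\gamma(b-a)}$. For a continuous function $v$ on $[a,b]$ define $I^{L}[v,\gamma](x)=\gamma\int_a^x e^{-\gamma(x-y)}v(y)\,dy$, $I^{R}[v,\gamma](x)=\gamma\int_x^b e^{-\gamma(y-x)}v(y)\,dy$, $I^{0}[v,\gamma](x)=\frac{\gamma}{2}\int_a^b e^{-\gamma|x-y|}v(y)\,dy$. Given real numbers $C_a, C_b$, define $\mathcal{D}_L[v,\gamma](x)=v(x)-I^L[v,\gamma](x)-A_L e^{-\gamma(x-a)}$ with $A_L=v(a)-C_a$ (so that $\mathcal{D}_L[v,\gamma](a)=C_a$); $\mathcal{D}_R[v,\gamma](x)=v(x)-I^R[v,\gamma](x)-B_R e^{-\gamma(b-x)}$ with $B_R=v(b)-C_b$ (so that $\mathcal{D}_R[v,\gamma](b)=C_b$); $\mathcal{D}_0[v,\gamma](x)=v(x)-I^0[v,\gamma](x)-A_0e^{-\gamma(x-a)}-B_0e^{-\gamma(b-x)}$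 with $A_0=\frac{1}{1-\mu^2}\big(\mu(I^0[v,\gamma](b)-v(b)+C_b)-(I^0[v,\gamma](a)-v(a)+C_a)\big)$, $B_0=\frac{1}{1-\mu^2}\big(\mu(I^0[v,\gamma](a)-v(a)+C_a)-(I^0[v,\gamma](b)-v(b)+C_b)\big)$ (so that $\mathcal{D}_0[v,\gamma](a)=C_a$ and $\mathcal{D}_0[v,\gamma](b)=C_b$). Here $\partial_x^p v(a)$, $\partial_x^p v(b)$ denote one-sided derivatives at the endpoints. *)

From Stdlib Require Import Reals.
From Coquelicot Require Import Coquelicot.
Open Scope R_scope.

Definition deriv_on (a b : R) (f f' : R -> R) : Prop :=
  forall x, a <= x <= b ->
  forall eps, 0 < eps -> exists delta, 0 < delta /\
    forall y, a <= y <= b -> Rabs (y - x) < delta ->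
      Rabs (f y - f x - f' x * (y - x)) <= eps * Rabs (y - x).

Definition cont_on (a b : R) (f : R -> R) : Prop :=
  forall x, a <= x <= b ->
  forall eps, 0 < eps -> exists delta, 0 < delta /\
    forall y, a <= y <= b -> Rabs (y - x) < delta -> Rabs (f y - f x) < eps.

Definition Cn_on (a b : R) (n : nat) (v : R -> R) (D : nat -> R -> R) : Prop :=
  (forall x, a <= x <= b -> D 0%nat x = v x) /\
  (forall p, (p < n)%nat -> deriv_on a b (D p) (D (S p))) /\
  cont_on a b (D n).

Definition IntL (a : R) (v : R -> R) (g x : R) : R :=
  g * RInt (fun y => exp (- g * (x - y)) * v y) a x.
Definition IntR (b : R) (v : R -> R) (g x : R) : R :=
  g * RInt (fun y => exp (- g * (y - x)) * v y) x b.
Definition Int0 (a b : R) (v : R -> R) (g x : R) : R :=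
  g / 2 * RInt (fun y => exp (- g * Rabs (x - y)) * v y) a b.

Definition mu (a b g : R) : R := exp (- g * (b - a)).

Definition DiffL (a Ca : R) (v : R -> R) (g x : R) : R :=
  v x - IntL a v g x - (v a - Ca) * exp (- g * (x - a)).
Definition DiffR (b Cb : R) (v : R -> R) (g x : R) : R :=
  v x - IntR b v g x - (v b - Cb) * exp (- g * (b - x)).

Definition Coef_A0 (a b Ca Cb : R) (v : R -> R) (g : R) : R :=
  / (1 - mu a b g ^ 2) *
  (mu a b g * (Int0 a b v g b - v b + Cb) - (Int0 a b v g a - v a + Ca)).
Definition Coef_B0 (a b Ca Cb : R) (v : R -> R) (g : R) : R :=
  / (1 - mu a b g ^ 2) *
  (mu a b g * (Int0 a b v g a - v a + Ca) - (Int0 a b v g b - v b + Cb)).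

Definition Diff0 (a b Ca Cb : R) (v : R -> R) (g x : R) : R :=
  v x - Int0 a b v g x - Coef_A0 a b Ca Cb v g * exp (- g * (x - a))
      - Coef_B0 a b Ca Cb v g * exp (- g * (b - x)).

(* Integration by parts against the kernel gives
   I^L[v] = v - v(a) e^{-g(x-a)} - g^{-1} I^L[v'] and I^R[v] = v - v(b) e^{-g(b-x)} + g^{-1} I^R[v'];
   iterating k times yields (i).  Since I^0 = (I^L + I^R)/2, two such steps give
   v - I^0[v] = - g^{-2} I^0[v''] up to a combination of e^{-g(x-a)} and e^{-g(b-x)}.
   These homogeneous solutions are exactly what the boundary correction in D_0 removes,
   so iterating two derivatives at a time yields (ii). *)

From Stdlib Require Import Reals Lra Lia.
From Coquelicot Require Import Coquelicot.
Open Scope R_scope.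

Definition clamp (a b z : R) : R := Rmax a (Rmin b z).

Lemma clamp_mem a b z : a <= b -> a <= clamp a b z <= b.
Proof. intros; unfold clamp, Rmax, Rmin; repeat destruct Rle_dec; lra. Qed.

Lemma clamp_id a b z : a <= z <= b -> clamp a b z = z.
Proof. intros; unfold clamp, Rmax, Rmin; repeat destruct Rle_dec; lra. Qed.

Lemma clamp_lipschitz a b y z : Rabs (clamp a b z - clamp a b y) <= Rabs (z - y).
Proof.
  unfold clamp, Rmax, Rmin, Rabs; repeat destruct Rle_dec; repeat destruct Rcase_abs; lra.
Qed.

Lemma clamp_dist a b y z : a <= y <= b -> Rabs (z - clamp a b z) <= Rabs (z - y).
Proof.
  intros; unfold clamp, Rmax, Rmin, Rabs; repeat destruct Rle_dec; repeat destruct Rcase_abs; lra.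
Qed.

Lemma continuous_clamp_comp a b f y :
  a <= b -> cont_on a b f -> continuous (fun z => f (clamp a b z)) y.
Proof.
  intros Hab Hf; apply continuity_pt_filterlim; intros eps Heps.
  destruct (Hf (clamp a b y) (clamp_mem a b y Hab) eps Heps) as [d [Hd Hfd]].
  exists d; split; [exact Hd|]; intros z [_ Hz]; simpl in *; unfold R_dist in *.
  apply Hfd; [now apply clamp_mem|].
  eapply Rle_lt_trans; [apply clamp_lipschitz | exact Hz].
Qed.

Lemma deriv_on_cont_on a b F F' : deriv_on a b F F' -> cont_on a b F.
Proof.
  intros HF x Hx eps Heps.
  destruct (HF x Hx 1 Rlt_0_1) as [d [Hd Hdx]].
  set (K := Rabs (F' x) + 1).
  assert (HK : 0 < K) by (unfold K; pose proof (Rabs_pos (F' x)); lra).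
  exists (Rmin d (eps / K)); split; [apply Rmin_pos; [exact Hd | now apply Rdiv_lt_0_compat]|].
  intros y Hy Hyx.
  assert (Hlip : Rabs (F y - F x) <= K * Rabs (y - x)).
  { replace (F y - F x) with ((F y - F x - F' x * (y - x)) + F' x * (y - x)) by ring.
    eapply Rle_trans; [apply Rabs_triang|]; rewrite Rabs_mult.
    pose proof (Hdx y Hy (Rlt_le_trans _ _ _ Hyx (Rmin_l _ _))); unfold K; lra. }
  assert (Hsmall : K * Rabs (y - x) < eps).
  { apply Rlt_le_trans with (K * (eps / K)).
    - apply Rmult_lt_compat_l; [exact HK|]; exact (Rlt_le_trans _ _ _ Hyx (Rmin_r _ _)).
    - right; field; lra. }
  lra.
Qed.

Lemma is_derive_of_taylor_bound (f : R -> R) x l :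
  (forall eps, 0 < eps -> exists delta, 0 < delta /\ forall z, Rabs (z - x) < delta ->
     Rabs (f z - f x - l * (z - x)) <= eps * Rabs (z - x)) ->
  is_derive f x l.
Proof.
  intros Hf; split; [apply is_linear_scal_l|].
  intros x' Hx'; apply (is_filter_lim_locally_unique (V := R_NormedModule)) in Hx'; subst x'.
  intros eps; destruct (Hf eps (cond_pos eps)) as [delta [Hdelta Hz]].
  exists (mkposreal delta Hdelta); intros z Hzx.
  pose proof (Hz z Hzx) as Hbound; rewrite (Rmult_comm l) in Hbound; exact Hbound.
Qed.

(* Extending F affinely beyond [a,b] with slopes F' a and F' b gives a function with
   two-sided derivative F' on [a,b], so that [is_RInt_derive] applies. *)
Definition extend (a b : R) (F F' : R -> R) (z : R) : R :=
  F (clamp a b z) + F' (clamp a b z) * (z - clamp a b z).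

Lemma extend_id a b F F' z : a <= z <= b -> extend a b F F' z = F z.
Proof. intros Hz; unfold extend; rewrite clamp_id by exact Hz; ring. Qed.

Lemma is_derive_extend a b F F' y :
  deriv_on a b F F' -> cont_on a b F' -> a <= y <= b ->
  is_derive (extend a b F F') y (F' y).
Proof.
  intros HF HF' Hy; apply is_derive_of_taylor_bound; intros eps Heps.
  destruct (HF y Hy (eps / 2)) as [d1 [Hd1 HFd]]; [lra|].
  destruct (HF' y Hy (eps / 2)) as [d2 [Hd2 HF'd]]; [lra|].
  exists (Rmin d1 d2); split; [now apply Rmin_pos|]; intros z Hz.
  pose proof (Rlt_le_trans _ _ _ Hz (Rmin_l _ _)) as Hz1.
  pose proof (Rlt_le_trans _ _ _ Hz (Rmin_r _ _)) as Hz2.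
  set (c := clamp a b z).
  assert (Hc : a <= c <= b) by (apply clamp_mem; lra).
  assert (Hcy : Rabs (c - y) <= Rabs (z - y)).
  { pose proof (clamp_lipschitz a b y z) as Hlip; rewrite (clamp_id a b y Hy) in Hlip; exact Hlip. }
  assert (Hzc : Rabs (z - c) <= Rabs (z - y)) by now apply clamp_dist.
  assert (Hsplit : extend a b F F' z - extend a b F F' y - F' y * (z - y)
                   = (F c - F y - F' y * (c - y)) + (F' c - F' y) * (z - c)).
  { rewrite (extend_id a b F F' y Hy); unfold extend; fold c; ring. }
  rewrite Hsplit; eapply Rle_trans; [apply Rabs_triang|]; rewrite Rabs_mult.
  pose proof (HFd c Hc (Rle_lt_trans _ _ _ Hcy Hz1)) as Htaylor.
  pose proof (HF'd c Hc (Rle_lt_trans _ _ _ Hcy Hz2)) as Hslope.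
  assert (Hrem : Rabs (F' c - F' y) * Rabs (z - c) <= eps / 2 * Rabs (z - y)).
  { apply Rmult_le_compat; [apply Rabs_pos | apply Rabs_pos | lra | exact Hzc]. }
  nra.
Qed.

Lemma ex_RInt_weighted a b c d (w f : R -> R) :
  a <= c -> c <= d -> d <= b -> (forall y, continuous w y) -> cont_on a b f ->
  ex_RInt (fun y => w y * f y) c d.
Proof.
  intros Hac Hcd Hdb Hw Hf.
  apply ex_RInt_ext with (fun y => w y * f (clamp a b y)).
  { intros y Hy; rewrite Rmin_left, Rmax_right in Hy by lra; rewrite clamp_id by lra; reflexivity. }
  apply (ex_RInt_continuous (V := R_CompleteNormedModule)); intros z _.
  apply (continuous_mult w (fun y => f (clamp a b y))); [apply Hw|].
  apply continuous_clamp_comp; [lra | exact Hf].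
Qed.

Lemma RInt_by_parts_on a b c d (F F' w w' : R -> R) :
  a <= c -> c <= d -> d <= b -> deriv_on a b F F' -> cont_on a b F' ->
  (forall y, is_derive w y (w' y)) -> (forall y, continuous w' y) ->
  RInt (fun y => w' y * F y) c d + RInt (fun y => w y * F' y) c d = w d * F d - w c * F c.
Proof.
  intros Hac Hcd Hdb HF HF' Hw Hw'.
  assert (HFc : cont_on a b F) by exact (deriv_on_cont_on a b F F' HF).
  assert (Hwc : forall y, continuous w y)
    by (intros y; apply (ex_derive_continuous (V := R_NormedModule)); eexists; apply Hw).
  set (dprod := fun y => w' y * F (clamp a b y) + w y * F' (clamp a b y)).
  assert (Hprod : is_RInt dprod c d (minus (w d * extend a b F F' d) (w c * extend a b F F' c))).
  { apply (is_RInt_derive (fun y => w y * extend a b F F' y)); intros y Hy;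
      rewrite Rmin_left, Rmax_right in Hy by lra.
    - unfold dprod; rewrite clamp_id by lra.
      rewrite <- (extend_id a b F F' y) at 1 by lra.
      apply (is_derive_mult w (extend a b F F')); [apply Hw | | apply Rmult_comm].
      apply is_derive_extend; [exact HF | exact HF' | lra].
    - apply (continuous_plus (fun y => w' y * F (clamp a b y)) (fun y => w y * F' (clamp a b y))).
      + apply (continuous_mult w' (fun y => F (clamp a b y))); [apply Hw'|].
        apply continuous_clamp_comp; [lra | exact HFc].
      + apply (continuous_mult w (fun y => F' (clamp a b y))); [apply Hwc|].
        apply continuous_clamp_comp; [lra | exact HF']. }
  rewrite (extend_id a b F F' c), (extend_id a b F F' d) in Hprod by lra.
  rewrite <- (RInt_plus (V := R_CompleteNormedModule))
    by (apply (ex_RInt_weighted a b); auto).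
  apply is_RInt_unique; eapply is_RInt_ext; [|exact Hprod].
  intros y Hy; rewrite Rmin_left, Rmax_right in Hy by lra.
  unfold dprod; rewrite clamp_id by lra; reflexivity.
Qed.

Lemma RInt_by_parts_exp_weight a b c d k (F F' w : R -> R) :
  a <= c -> c <= d -> d <= b -> deriv_on a b F F' -> cont_on a b F' ->
  (forall y, is_derive w y (k * w y)) ->
  k * RInt (fun y => w y * F y) c d = w d * F d - w c * F c - RInt (fun y => w y * F' y) c d.
Proof.
  intros Hac Hcd Hdb HF HF' Hw.
  assert (Hwc : forall y, continuous w y)
    by (intros y; apply (ex_derive_continuous (V := R_NormedModule)); eexists; apply Hw).
  assert (Hparts := RInt_by_parts_on a b c d F F' w (fun y => k * w y) Hac Hcd Hdb HF HF' Hw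
                      (fun y => continuous_scal_r k w y (Hwc y))).
  rewrite (RInt_ext (fun y => k * w y * F y) (fun y => scal k (w y * F y))),
    (RInt_scal (V := R_CompleteNormedModule)) in Hparts.
  - change scal with Rmult in Hparts; simpl in Hparts; lra.
  - exact (ex_RInt_weighted a b c d w F Hac Hcd Hdb Hwc (deriv_on_cont_on a b F F' HF)).
  - intros y _; apply Rmult_assoc.
Qed.

Lemma IntL_by_parts a b g (F F' : R -> R) t :
  g <> 0 -> deriv_on a b F F' -> cont_on a b F' -> a <= t <= b ->
  IntL a F g t = F t - F a * exp (- g * (t - a)) - / g * IntL a F' g t.
Proof.
  intros Hg HF HF' Ht; unfold IntL.
  rewrite (RInt_by_parts_exp_weight a b a t g F F') by
    (first [lra | assumption | intros y; auto_derive; [easy | unfold Rminus; ring]]).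
  rewrite Rminus_diag, Rmult_0_r, exp_0; field; exact Hg.
Qed.

Lemma IntR_by_parts a b g (F F' : R -> R) t :
  g <> 0 -> deriv_on a b F F' -> cont_on a b F' -> a <= t <= b ->
  IntR b F g t = F t - F b * exp (- g * (b - t)) + / g * IntR b F' g t.
Proof.
  intros Hg HF HF' Ht; unfold IntR.
  replace (g * RInt (fun y => exp (- g * (y - t)) * F y) t b)
    with (- (- g * RInt (fun y => exp (- g * (y - t)) * F y) t b)) by ring.
  rewrite (RInt_by_parts_exp_weight a b t b (- g) F F') by
    (first [lra | assumption | intros y; auto_derive; [easy | unfold Rminus; ring]]).
  rewrite Rminus_diag, Rmult_0_r, exp_0; field; exact Hg.
Qed.

Lemma Int0_split a b g (F : R -> R) t :
  cont_on a b F -> a <= t <= b -> Int0 a b F g t = (IntL a F g t + IntR b F g t) / 2.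
Proof.
  intros HF Ht; unfold Int0, IntL, IntR.
  assert (Hw : forall y, continuous (fun y => exp (- g * Rabs (t - y))) y).
  { intros y; apply continuous_exp_comp, (continuous_scal_r (- g) (fun y => Rabs (t - y))).
    apply continuous_Rabs_comp, (ex_derive_continuous (V := R_NormedModule)); auto_derive; easy. }
  rewrite <- (RInt_Chasles (V := R_CompleteNormedModule) _ a t b)
    by (apply (ex_RInt_weighted a b); [lra | lra | lra | exact Hw | exact HF]).
  rewrite (RInt_ext _ (fun y => exp (- g * (t - y)) * F y) a t)
    by (intros y Hy; rewrite Rmin_left, Rmax_right in Hy by lra; rewrite Rabs_right by lra; easy).
  rewrite (RInt_ext _ (fun y => exp (- g * (y - t)) * F y) t b)
    by (intros y Hy; rewrite Rmin_left, Rmax_right in Hy by lra; rewrite Rabs_left by lra;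
        do 3 f_equal; ring).
  change plus with Rplus; field.
Qed.

Lemma Int0_by_parts_twice a b g (F F' F'' : R -> R) t :
  g <> 0 -> deriv_on a b F F' -> deriv_on a b F' F'' -> cont_on a b F'' -> a <= t <= b ->
  F t - Int0 a b F g t =
    (F a - / g * F' a) / 2 * exp (- g * (t - a)) + (F b + / g * F' b) / 2 * exp (- g * (b - t))
    - / g * / g * Int0 a b F'' g t.
Proof.
  intros Hg HF HF' HF'' Ht.
  assert (HF'c := deriv_on_cont_on a b F' F'' HF').
  rewrite (Int0_split a b g F), (Int0_split a b g F'') by
    (first [exact (deriv_on_cont_on a b F F' HF) | assumption]).
  rewrite (IntL_by_parts a b g F F'), (IntL_by_parts a b g F' F''),
    (IntR_by_parts a b g F F'), (IntR_by_parts a b g F' F'') by assumption.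
  field; exact Hg.
Qed.

Lemma RInt_weighted_ext_on a b c d (k v w : R -> R) :
  (forall y, a <= y <= b -> v y = w y) -> a <= c <= b -> a <= d <= b ->
  RInt (fun y => k y * v y) c d = RInt (fun y => k y * w y) c d.
Proof.
  intros Hvw Hc Hd; apply RInt_ext; intros y Hy.
  rewrite Hvw; [reflexivity|].
  split; [apply Rle_trans with (Rmin c d) | apply Rle_trans with (Rmax c d)]; try lra.
  - apply Rmin_glb; lra.
  - apply Rmax_lub; lra.
Qed.

Lemma DiffL_ext_on a b Ca (v w : R -> R) g x :
  (forall y, a <= y <= b -> v y = w y) -> a <= x <= b -> DiffL a Ca v g x = DiffL a Ca w g x.
Proof.
  intros Hvw Hx; unfold DiffL, IntL.
  rewrite (RInt_weighted_ext_on a b a x _ v w Hvw), (Hvw x), (Hvw a) by lra; reflexivity.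
Qed.

Lemma DiffR_ext_on a b Cb (v w : R -> R) g x :
  (forall y, a <= y <= b -> v y = w y) -> a <= x <= b -> DiffR b Cb v g x = DiffR b Cb w g x.
Proof.
  intros Hvw Hx; unfold DiffR, IntR.
  rewrite (RInt_weighted_ext_on a b x b _ v w Hvw), (Hvw x), (Hvw b) by lra; reflexivity.
Qed.

Lemma Diff0_ext_on a b Ca Cb (v w : R -> R) g x :
  (forall y, a <= y <= b -> v y = w y) -> a <= x <= b ->
  Diff0 a b Ca Cb v g x = Diff0 a b Ca Cb w g x.
Proof.
  intros Hvw Hx; unfold Diff0, Coef_A0, Coef_B0, Int0.
  rewrite !(RInt_weighted_ext_on a b a b _ v w Hvw), (Hvw x), (Hvw a), (Hvw b) by lra; reflexivity.
Qed.

Lemma one_sub_mu_sqr_neq0 a b g : a < b -> g <> 0 -> 1 - mu a b g ^ 2 <> 0.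
Proof.
  intros Hab Hg Hmu; unfold mu in Hmu.
  assert (Hexp : exp (- g * (b - a) + - g * (b - a)) = exp 0)
    by (rewrite exp_plus, exp_0; lra).
  apply exp_inv in Hexp.
  assert (Hprod : g * (b - a) = 0) by lra.
  apply Rmult_integral in Hprod; lra.
Qed.

(* [homog_residual a b g f] is [f] minus the combination of the homogeneous solutions
   [exp (- g * (x - a))] and [exp (- g * (b - x))] that agrees with [f] at [a] and [b]. *)
Definition homog_residual (a b g : R) (f : R -> R) (x : R) : R :=
  f x + (mu a b g * f b - f a) / (1 - mu a b g ^ 2) * exp (- g * (x - a))
      + (mu a b g * f a - f b) / (1 - mu a b g ^ 2) * exp (- g * (b - x)).

Lemma homog_residual_sub a b g (f h : R -> R) x :
  homog_residual a b g (fun t => f t - h t) x = homog_residual a b g f x - homog_residual a b g h x.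
Proof. unfold homog_residual, Rdiv; ring. Qed.

Lemma Diff0_homog_residual a b Ca Cb (v : R -> R) g x :
  Diff0 a b Ca Cb v g x =
    homog_residual a b g (fun t => v t - Int0 a b v g t) x
    - (mu a b g * Cb - Ca) / (1 - mu a b g ^ 2) * exp (- g * (x - a))
    - (mu a b g * Ca - Cb) / (1 - mu a b g ^ 2) * exp (- g * (b - x)).
Proof. unfold Diff0, Coef_A0, Coef_B0, homog_residual, Rdiv; ring. Qed.

(* The boundary terms left by the two integrations by parts are homogeneous solutions. *)
Lemma homog_residual_sub_Int0 a b g (F F' F'' : R -> R) x :
  a < b -> g <> 0 -> deriv_on a b F F' -> deriv_on a b F' F'' -> cont_on a b F'' ->
  a <= x <= b ->
  homog_residual a b g (fun t => F t - Int0 a b F g t) x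
  = - (/ g * / g) * homog_residual a b g (Int0 a b F'' g) x.
Proof.
  intros Hab Hg HF HF' HF'' Hx.
  pose proof (one_sub_mu_sqr_neq0 a b g Hab Hg) as Hmu.
  unfold homog_residual; cbv beta.
  rewrite !(Int0_by_parts_twice a b g F F' F'') by (assumption || lra).
  rewrite !Rminus_diag, !Rmult_0_r, exp_0.
  unfold mu in *; field; split; assumption.
Qed.

Section Expansions.

Variables (a b g : R) (n : nat) (D : nat -> R -> R).
Hypotheses (Hg : g <> 0)
  (HD : forall p, (p < n)%nat -> deriv_on a b (D p) (D (S p)))
  (HDn : cont_on a b (D n)).

Lemma cont_on_D p : (p <= n)%nat -> cont_on a b (D p).
Proof.
  intros Hp; destruct (Nat.eq_dec p n) as [-> | Hpn]; [exact HDn|].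
  apply (deriv_on_cont_on a b (D p) (D (S p))), HD; lia.
Qed.

Local Ltac side_conditions := first [exact Hg | apply HD; lia | apply cont_on_D; lia | lra].

Lemma DiffL_expansion Ca x m : a <= x <= b -> (m < n)%nat ->
  DiffL a Ca (D 0%nat) g x =
    - sum_n_m (fun p => (- (1 / g)) ^ p * (D p x - D p a * exp (- g * (x - a)))) 1 m
    - (- (1 / g)) ^ S m * IntL a (D (S m)) g x + Ca * exp (- g * (x - a)).
Proof.
  intros Hx; induction m as [| m IH]; intros Hm.
  - unfold DiffL; rewrite sum_n_m_zero by lia.
    rewrite (IntL_by_parts a b g (D 0%nat) (D 1%nat)) by side_conditions.
    change zero with 0; simpl; field; exact Hg.
  - rewrite IH by lia; rewrite sum_n_Sm by lia.
    rewrite (IntL_by_parts a b g (D (S m)) (D (S (S m)))) by side_conditions.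
    change plus with Rplus; simpl; field; exact Hg.
Qed.

Lemma DiffR_expansion Cb x m : a <= x <= b -> (m < n)%nat ->
  DiffR b Cb (D 0%nat) g x =
    - sum_n_m (fun p => (1 / g) ^ p * (D p x - D p b * exp (- g * (b - x)))) 1 m
    - (1 / g) ^ S m * IntR b (D (S m)) g x + Cb * exp (- g * (b - x)).
Proof.
  intros Hx; induction m as [| m IH]; intros Hm.
  - unfold DiffR; rewrite sum_n_m_zero by lia.
    rewrite (IntR_by_parts a b g (D 0%nat) (D 1%nat)) by side_conditions.
    change zero with 0; simpl; field; exact Hg.
  - rewrite IH by lia; rewrite sum_n_Sm by lia.
    rewrite (IntR_by_parts a b g (D (S m)) (D (S (S m)))) by side_conditions.
    change plus with Rplus; simpl; field; exact Hg.
Qed.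

Lemma homog_residual_expansion x m : a < b -> a <= x <= b -> (2 * m + 2 <= n)%nat ->
  homog_residual a b g (fun t => D 0%nat t - Int0 a b (D 0%nat) g t) x =
    - sum_n_m (fun p => (1 / g) ^ (2 * p) * homog_residual a b g (D (2 * p)%nat) x) 1 m
    - (1 / g) ^ (2 * m + 2) * homog_residual a b g (Int0 a b (D (2 * m + 2)%nat) g) x.
Proof.
  intros Hlt Hx; induction m as [| m IH]; intros Hm.
  - rewrite sum_n_m_zero by lia.
    rewrite (homog_residual_sub_Int0 a b g (D 0%nat) (D 1%nat) (D 2%nat)) by side_conditions.
    change zero with 0; simpl; field; exact Hg.
  - rewrite IH by lia; rewrite sum_n_Sm by lia.
    replace (2 * S m + 2)%nat with (S (S (2 * m + 2))) by lia.
    replace (2 * S m)%nat with (2 * m + 2)%nat by lia.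
    set (q := (2 * m + 2)%nat) in *.
    assert (Hstep : homog_residual a b g (Int0 a b (D q) g) x =
              homog_residual a b g (D q) x
              + / g * / g * homog_residual a b g (Int0 a b (D (S (S q))) g) x).
    { pose proof (homog_residual_sub a b g (D q) (Int0 a b (D q) g) x) as Hsub.
      rewrite (homog_residual_sub_Int0 a b g (D q) (D (S q)) (D (S (S q)))) in Hsub
        by side_conditions.
      lra. }
    replace ((1 / g) ^ S (S q)) with ((1 / g) ^ q * (/ g * / g))
      by (simpl; field; exact Hg).
    rewrite Hstep; change plus with Rplus; ring.
Qed.

End Expansions.

Theorem lemma1 (a b g : R) (k : nat) (Ca Cb : R) :
  a < b -> 0 < g -> (1 <= k)%nat ->
  (forall (v : R -> R) (D : nat -> R -> R), Cn_on a b (k + 1) v D ->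
    forall x, a <= x <= b ->
      DiffL a Ca v g x =
        - sum_n_m (fun p => (- (1 / g)) ^ p * (D p x - D p a * exp (- g * (x - a)))) 1 k
        - (- (1 / g)) ^ (k + 1) * IntL a (D (k + 1)%nat) g x
        + Ca * exp (- g * (x - a))
      /\
      DiffR b Cb v g x =
        - sum_n_m (fun p => (1 / g) ^ p * (D p x - D p b * exp (- g * (b - x)))) 1 k
        - (1 / g) ^ (k + 1) * IntR b (D (k + 1)%nat) g x
        + Cb * exp (- g * (b - x))) /\
  (forall (v : R -> R) (D : nat -> R -> R), Cn_on a b (2 * k + 2) v D ->
    forall x, a <= x <= b ->
      Diff0 a b Ca Cb v g x =
        - sum_n_m (fun p => (1 / g) ^ (2 * p) *
             (D (2 * p)%nat x
              + (mu a b g * D (2 * p)%nat b - D (2 * p)%nat a) / (1 - mu a b g ^ 2)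
                  * exp (- g * (x - a))
              + (mu a b g * D (2 * p)%nat a - D (2 * p)%nat b) / (1 - mu a b g ^ 2)
                  * exp (- g * (b - x)))) 1 k
        - (mu a b g * Cb - Ca) / (1 - mu a b g ^ 2) * exp (- g * (x - a))
        - (mu a b g * Ca - Cb) / (1 - mu a b g ^ 2) * exp (- g * (b - x))
        - (1 / g) ^ (2 * k + 2) *
            (Int0 a b (D (2 * k + 2)%nat) g x
             + (mu a b g * Int0 a b (D (2 * k + 2)%nat) g b - Int0 a b (D (2 * k + 2)%nat) g a)
                 / (1 - mu a b g ^ 2) * exp (- g * (x - a))
             + (mu a b g * Int0 a b (D (2 * k + 2)%nat) g a - Int0 a b (D (2 * k + 2)%nat) g b)
                 / (1 - mu a b g ^ 2) * exp (- g * (b - x)))).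
Proof.
  intros Hab Hg _.
  assert (Hg0 : g <> 0) by lra.
  split.
  - intros v D [Hv [HD HDn]] x Hx.
    rewrite <- (DiffL_ext_on a b Ca (D 0%nat) v), <- (DiffR_ext_on a b Cb (D 0%nat) v)
      by assumption.
    rewrite Nat.add_1_r in HD, HDn |- *.
    split; [apply (DiffL_expansion a b g (S k)) | apply (DiffR_expansion a b g (S k))];
      first [assumption | lia].
  - intros v D [Hv [HD HDn]] x Hx.
    rewrite <- (Diff0_ext_on a b Ca Cb (D 0%nat) v), Diff0_homog_residual by assumption.
    rewrite (homog_residual_expansion a b g (2 * k + 2) D Hg0 HD HDn x k Hab Hx (le_n _)).
    unfold homog_residual; ring.
Qed.
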